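(* Let $A$, $B$ and $C$ be distinct (axis-parallel) rectangular regions in the plane. Assume $B$ shares an edge with $A$ and shares an edge with $C$, but $A$ and $C$ are disjoint except possibly in a single point. Let $S_A$, $S_B$, $S_C$ be finite sets of points in $A$, $B$ and $C$ respectively. Let $x_A$ and $x_C$ be the points of $S_B$ closest to $A$ and to $C$ respectively, and assume $x_A \neq x_C$. Let $P$ be a noncrossing Hamiltonian path through $S_B$ with endpoints $x_A$ and $x_C$. Let $P'$ be a path obtained from $P$ by adding an edge from $x_A$ to any point of $S_A$ and an edge from $x_C$ to any point of $S_C$. Then $P'$ is noncrossing.
   Context: Edges are straight line segments between points: for an edge $e=\{a,b\}$, $L(e)$ is the closed segment from $a$ to $b$. A path (set of edges) is noncrossing if no two of its edges have intersecting line segments (other than at a shared endpoint). The distance from a point $x$ to a set $R$ is $d(x,R)=\min_{y\in R} d(x,y)$ with $d$ the Euclidean distance; the point of $S_B$ closest to $A$ is the one minimizing $d(\cdot, A)$. *)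

From Stdlib Require Import Reals List.
Open Scope R_scope.

Definition point : Type := (R * R)%type.

Definition dist (p q : point) : R :=
  sqrt ((fst p - fst q) ^ 2 + (snd p - snd q) ^ 2).

Definition seg (p q : point) (z : point) : Prop :=
  exists t : R, 0 <= t <= 1 /\
    z = ((1 - t) * fst p + t * fst q, (1 - t) * snd p + t * snd q).

Record rect := Rect { rx1 : R; rx2 : R; ry1 : R; ry2 : R }.

Definition wf_rect (r : rect) : Prop := rx1 r < rx2 r /\ ry1 r < ry2 r.

Definition in_rect (r : rect) (p : point) : Prop :=
  rx1 r <= fst p <= rx2 r /\ ry1 r <= snd p <= ry2 r.

Definition is_side (r : rect) (p q : point) : Prop :=
  let c1 := (rx1 r, ry1 r) in let c2 := (rx2 r, ry1 r) in
  let c3 := (rx2 r, ry2 r) in let c4 := (rx1 r, ry2 r) in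
  (p, q) = (c1, c2) \/ (p, q) = (c2, c3) \/ (p, q) = (c3, c4) \/ (p, q) = (c4, c1).

Definition shares_edge (A B : rect) : Prop :=
  exists p q, is_side A p q /\
    (exists p' q', is_side B p' q' /\ forall z, seg p q z <-> seg p' q' z) /\
    (forall z, (in_rect A z /\ in_rect B z) <-> seg p q z).

Definition meet_in_at_most_a_point (A C : rect) : Prop :=
  forall p q, in_rect A p -> in_rect C p -> in_rect A q -> in_rect C q -> p = q.

Definition is_dist_set (x : point) (X : point -> Prop) (r : R) : Prop :=
  (exists y, X y /\ dist x y = r) /\ (forall y, X y -> r <= dist x y).

Definition closest_point (S : list point) (X : point -> Prop) (x : point) : Prop :=
  In x S /\
  forall y, In y S -> y <> x ->
    forall r s, is_dist_set x X r -> is_dist_set y X s -> r < s.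

Fixpoint path_edges (l : list point) : list (point * point) :=
  match l with
  | p :: ((q :: _) as l') => (p, q) :: path_edges l'
  | _ => nil
  end.

Definition noncrossing (E : list (point * point)) : Prop :=
  forall i j, (i < length E)%nat -> (j < length E)%nat -> i <> j ->
    forall z,
      seg (fst (nth i E ((0,0),(0,0)))) (snd (nth i E ((0,0),(0,0)))) z ->
      seg (fst (nth j E ((0,0),(0,0)))) (snd (nth j E ((0,0),(0,0)))) z ->
      (z = fst (nth i E ((0,0),(0,0))) \/ z = snd (nth i E ((0,0),(0,0)))) /\
      (z = fst (nth j E ((0,0),(0,0))) \/ z = snd (nth j E ((0,0),(0,0)))).

Definition hamiltonian_path (S : list point) (P : list point) (x y : point) : Prop :=
  NoDup P /\ (forall z, In z P <-> In z S) /\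
  ((hd (0,0) P = x /\ last P (0,0) = y) \/ (hd (0,0) P = y /\ last P (0,0) = x)).

From Pilot Require Import Defs.
From Stdlib Require Import Reals List Lra Lia Psatz Classical.
Open Scope R_scope.

(* Sharing an edge, [A] lies across one side of [B] and covers it, so the
   distance from a point of [B] to [A] is its distance to the line of that
   side: [x_A] is the unique point of [S_B] furthest in the outward normal
   direction [u] of that side.  Every edge of [P] then lies in the half-plane
   [<u, .> <= <u, x_A>] and touches its boundary only at [x_A], while the new
   edge [x_A a] lies in the opposite half-plane; likewise for [C].  Since [A]
   and [C] meet in at most a point, [A] lies behind the side of [B] facing [C]
   and vice versa; together with [x_A <> x_C] this lets the two new edges meet
   only at [a = c]. *)

Definition dot (u p : point) : R := fst u * fst p + snd u * snd p.

Lemma seg_dot p q z : seg p q z -> exists t, 0 <= t <= 1 /\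
  (forall u, dot u z = (1 - t) * dot u p + t * dot u q) /\
  (t = 0 -> z = p) /\ (t = 1 -> z = q).
Proof.
  intros [t [Ht ->]]. exists t. split; [exact Ht|]. split; [|split].
  - intros u. unfold dot; simpl. ring.
  - intros ->. destruct p; simpl; f_equal; ring.
  - intros ->. destruct q; simpl; f_equal; ring.
Qed.

Lemma seg_start p q : seg p q p.
Proof. exists 0. split; [lra|]. destruct p; simpl; f_equal; ring. Qed.

Lemma seg_end p q : seg p q q.
Proof. exists 1. split; [lra|]. destruct q; simpl; f_equal; ring. Qed.

Lemma seg_dot_ge u k p q z : k <= dot u p -> k <= dot u q -> seg p q z -> k <= dot u z.
Proof.
  intros Hp Hq Hz. destruct (seg_dot _ _ _ Hz) as [t [Ht [-> _]]]. nra.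
Qed.

Lemma seg_dot_ge_apex u x p q z :
  (p = x \/ dot u p < dot u x) -> (q = x \/ dot u q < dot u x) ->
  seg p q z -> dot u x <= dot u z -> (z = p \/ z = q) /\ z = x.
Proof.
  intros Hp Hq Hz Hx. destruct (seg_dot _ _ _ Hz) as [t [Ht [Hd [Ht0 Ht1]]]].
  specialize (Hd u).
  destruct Hp as [-> | Hp], Hq as [-> | Hq].
  - assert (z = x) by (destruct Hz as [s [_ ->]]; destruct x; simpl; f_equal; ring).
    auto.
  - assert (t = 0) by nra. split; auto.
  - assert (t = 1) by nra. split; auto.
  - exfalso.
    assert (0 <= (1 - t) * (dot u x - dot u p)) by (apply Rmult_le_pos; lra).
    destruct (Rle_lt_dec t 0); [assert (t = 0) by lra; subst; lra|].
    assert (0 < t * (dot u x - dot u q)) by (apply Rmult_lt_0_compat; lra).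
    lra.
Qed.

Lemma weighted_gaps_vanish S T Du Eu Dv Ev :
  0 <= S -> 0 <= T -> 0 <= Du < Eu -> 0 <= Dv < Ev ->
  S * Eu <= T * Du -> T * Ev <= S * Dv -> S = 0 /\ T = 0.
Proof.
  intros HS HT Hu Hv Hsu Htv.
  assert (S <= T) by nra.
  assert (T <= S) by nra.
  assert (S * (Eu - Du) <= 0) by nra.
  nra.
Qed.

Lemma seg_meet_far_ends u v ku kv xu a xv c z :
  dot u xv < dot u xu -> dot v xu < dot v xv ->
  dot u xu <= ku <= dot u a -> dot u c <= ku ->
  dot v xv <= kv <= dot v c -> dot v a <= kv ->
  seg xu a z -> seg xv c z -> z = a /\ z = c.
Proof.
  intros Hu Hv Hua Huc Hvc Hva Za Zc.
  destruct (seg_dot _ _ _ Za) as [t [Ht [Dt [_ Et]]]].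
  destruct (seg_dot _ _ _ Zc) as [s [Hs [Ds [_ Es]]]].
  assert (Eu := eq_trans (eq_sym (Dt u)) (Ds u)).
  assert (Ev := eq_trans (eq_sym (Dt v)) (Ds v)).
  assert (0 <= t * (dot u a - ku)) by (apply Rmult_le_pos; lra).
  assert (0 <= s * (ku - dot u c)) by (apply Rmult_le_pos; lra).
  assert (0 <= t * (kv - dot v a)) by (apply Rmult_le_pos; lra).
  assert (0 <= s * (dot v c - kv)) by (apply Rmult_le_pos; lra).
  destruct (weighted_gaps_vanish (1 - s) (1 - t)
              (ku - dot u xu) (ku - dot u xv) (kv - dot v xv) (kv - dot v xu));
    try lra.
  split; [apply Et | apply Es]; lra.
Qed.

Definition meet_at_endpoints (e f : point * point) : Prop :=
  forall z, seg (fst e) (snd e) z -> seg (fst f) (snd f) z ->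
    (z = fst e \/ z = snd e) /\ (z = fst f \/ z = snd f).

Lemma meet_at_endpoints_sym e f : meet_at_endpoints e f -> meet_at_endpoints f e.
Proof. intros H z Zf Ze. destruct (H z Ze Zf). auto. Qed.

Lemma noncrossing_pair e f : meet_at_endpoints e f -> noncrossing (e :: f :: nil).
Proof.
  intros H i j Hi Hj Hij. simpl in Hi, Hj.
  destruct i as [|[|i]], j as [|[|j]]; try lia.
  - exact H.
  - exact (meet_at_endpoints_sym _ _ H).
Qed.

Lemma noncrossing_app E F :
  noncrossing E -> noncrossing F ->
  (forall e f, In e E -> In f F -> meet_at_endpoints e f) ->
  noncrossing (E ++ F).
Proof.
  intros HE HF HEF i j Hi Hj Hij.
  change (meet_at_endpoints (nth i (E ++ F) ((0,0),(0,0))) (nth j (E ++ F) ((0,0),(0,0)))).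
  rewrite length_app in Hi, Hj.
  destruct (Nat.lt_ge_cases i (length E)) as [iE | iF],
           (Nat.lt_ge_cases j (length E)) as [jE | jF];
    rewrite ?(app_nth1 E F _ iE), ?(app_nth2 E F _ iF),
            ?(app_nth1 E F _ jE), ?(app_nth2 E F _ jF).
  - exact (HE i j iE jE Hij).
  - apply HEF; apply nth_In; lia.
  - apply meet_at_endpoints_sym, HEF; apply nth_In; lia.
  - exact (HF (i - length E) (j - length E) ltac:(lia) ltac:(lia) ltac:(lia))%nat.
Qed.

Lemma meet_at_endpoints_apex u x a p q :
  (p = x \/ dot u p < dot u x) -> (q = x \/ dot u q < dot u x) ->
  dot u x <= dot u a -> meet_at_endpoints (p, q) (x, a).
Proof.
  intros Hp Hq Ha z Zpq Zxa; simpl in *.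
  destruct (seg_dot_ge_apex u x p q z Hp Hq Zpq) as [Hz ->].
  - apply (seg_dot_ge u _ x a); [lra | lra | exact Zxa].
  - auto.
Qed.

Lemma path_edges_in l e : In e (path_edges l) -> In (fst e) l /\ In (snd e) l.
Proof.
  induction l as [|p [|q l] IH]; simpl; try tauto.
  intros [<- | H]; simpl; [tauto|].
  destruct (IH H); simpl in *; tauto.
Qed.

Inductive side := East | West | North | South.

Definition normal (s : side) : point :=
  match s with East => (1, 0) | West => (-1, 0) | North => (0, 1) | South => (0, -1) end.

(* [B] is the intersection of the half-planes [dot (normal s) <= level s B]. *)
Definition level (s : side) (B : rect) : R :=
  match s with East => rx2 B | West => - rx1 B | North => ry2 B | South => - ry1 B end.

Definition abuts (s : side) (B A : rect) : Prop :=
  match s with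
  | East => rx1 A = rx2 B /\ ry1 A <= ry1 B /\ ry2 B <= ry2 A
  | West => rx2 A = rx1 B /\ ry1 A <= ry1 B /\ ry2 B <= ry2 A
  | North => ry1 A = ry2 B /\ rx1 A <= rx1 B /\ rx2 B <= rx2 A
  | South => ry2 A = ry1 B /\ rx1 A <= rx1 B /\ rx2 B <= rx2 A
  end.

Lemma in_rect_below_level s B p : in_rect B p -> dot (normal s) p <= level s B.
Proof. unfold in_rect, dot; destruct s; simpl; lra. Qed.

Lemma abuts_above_level s B A p : abuts s B A -> in_rect A p -> level s B <= dot (normal s) p.
Proof. unfold in_rect, dot; destruct s; simpl; lra. Qed.

Lemma dot_normal_sub_le_dist s p q : dot (normal s) q - dot (normal s) p <= Defs.dist p q.
Proof.
  unfold Defs.dist. set (w := dot (normal s) q - dot (normal s) p).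
  destruct (Rle_lt_dec w 0); [pose proof (sqrt_pos ((fst p - fst q) ^ 2 + (snd p - snd q) ^ 2)); lra|].
  rewrite <- (sqrt_pow2 w) by lra. apply sqrt_le_1_alt.
  pose proof (pow2_ge_0 (fst p - fst q)). pose proof (pow2_ge_0 (snd p - snd q)).
  unfold w, dot; destruct s; simpl; nra.
Qed.

Lemma dist_to_abutting s B A p : wf_rect A -> abuts s B A -> in_rect B p ->
  is_dist_set p (in_rect A) (level s B - dot (normal s) p).
Proof.
  intros [wA1 wA2] HAB Hp. split.
  - destruct s;
      [exists (rx2 B, snd p) | exists (rx1 B, snd p) | exists (fst p, ry2 B) | exists (fst p, ry1 B)];
      unfold in_rect, Defs.dist, dot in *; simpl in *;
      (split; [lra | rewrite <- sqrt_pow2 by lra; f_equal; ring]).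
  - intros y Hy. pose proof (dot_normal_sub_le_dist s p y).
    pose proof (abuts_above_level s B A y HAB Hy). lra.
Qed.

Lemma closest_point_highest s B A S x : wf_rect A -> abuts s B A ->
  (forall p, In p S -> in_rect B p) -> closest_point S (in_rect A) x ->
  forall y, In y S -> y = x \/ dot (normal s) y < dot (normal s) x.
Proof.
  intros wA HAB SB [Hx Hclosest] y Hy.
  destruct (classic (y = x)) as [| Hyx]; [now left | right].
  pose proof (Hclosest y Hy Hyx _ _ (dist_to_abutting s B A x wA HAB (SB x Hx))
                (dist_to_abutting s B A y wA HAB (SB y Hy))).
  lra.
Qed.

Ltac case_min_max :=
  unfold Rmax, Rmin in *;
  repeat match goal with
  | |- context [Rle_dec ?a ?b] => destruct (Rle_dec a b)
  | H : context [Rle_dec ?a ?b] |- _ => destruct (Rle_dec a b)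
  end.

Lemma meet_in_at_most_a_point_sym A C :
  meet_in_at_most_a_point A C -> meet_in_at_most_a_point C A.
Proof. intros H p q Cp Ap Cq Aq. exact (H p q Ap Cp Aq Cq). Qed.

(* Two corners of the overlap [A ∩ C] coincide, so it degenerates in both
   directions unless it is empty in one of them. *)
Lemma meet_in_at_most_a_point_cases A C : wf_rect A -> wf_rect C ->
  meet_in_at_most_a_point A C ->
  rx2 A < rx1 C \/ rx2 C < rx1 A \/ ry2 A < ry1 C \/ ry2 C < ry1 A \/
  ((rx2 A = rx1 C \/ rx2 C = rx1 A) /\ (ry2 A = ry1 C \/ ry2 C = ry1 A)).
Proof.
  intros [] [] Hm.
  destruct (Rlt_le_dec (rx2 A) (rx1 C)); [tauto|].
  destruct (Rlt_le_dec (rx2 C) (rx1 A)); [tauto|].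
  destruct (Rlt_le_dec (ry2 A) (ry1 C)); [tauto|].
  destruct (Rlt_le_dec (ry2 C) (ry1 A)); [tauto|].
  do 4 right.
  set (x0 := Rmax (rx1 A) (rx1 C)). set (y0 := Rmax (ry1 A) (ry1 C)).
  assert (Ex := Hm (x0, y0) (Rmin (rx2 A) (rx2 C), y0)).
  assert (Ey := Hm (x0, y0) (x0, Rmin (ry2 A) (ry2 C))).
  unfold in_rect, x0, y0 in *; simpl in *.
  case_min_max;
    try (apply (f_equal fst) in Ex; simpl in Ex);
    try (apply (f_equal snd) in Ey; simpl in Ey); lra.
Qed.

Lemma abuts_disjoint_below_level sA sC B A C p :
  wf_rect A -> wf_rect B -> wf_rect C -> meet_in_at_most_a_point A C ->
  abuts sA B A -> abuts sC B C -> in_rect A p ->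
  dot (normal sC) p <= level sC B.
Proof.
  intros wA wB wC Hm HA HC Hp.
  pose proof (meet_in_at_most_a_point_cases A C wA wC Hm) as Hcases.
  destruct wA, wB, wC. unfold in_rect, dot in *.
  destruct sA, sC; simpl in *; lra.
Qed.

(* If [A] poked past the common side into [B], a point of [A ∩ B] off that
   side would contradict [A ∩ B ⊆ side]. *)
Lemma abuts_of_shares_edge A B : wf_rect A -> wf_rect B -> shares_edge B A ->
  exists s, abuts s B A.
Proof.
  intros [wA1 wA2] [wB1 wB2] [p [q [Hside [_ Hmeet]]]].
  assert (Hp := proj2 (Hmeet p) (seg_start p q)).
  assert (Hq := proj2 (Hmeet q) (seg_end p q)).
  assert (beyond_side : forall s w, in_rect A w -> in_rect B w ->
            dot (normal s) p = level s B -> dot (normal s) q = level s B ->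
            level s B <= dot (normal s) w).
  { intros s w Aw Bw Ep Eq. apply (seg_dot_ge _ _ p q); [lra | lra | now apply Hmeet]. }
  destruct Hside as [E | [E | [E | E]]]; injection E as -> ->;
    unfold in_rect in Hp, Hq; simpl in Hp, Hq.
  - exists South. simpl. destruct (Rle_lt_dec (ry2 A) (ry1 B)); [lra | exfalso].
    enough (Hw : level South B <= dot (normal South) (rx1 B, Rmin (ry2 A) (ry2 B)))
      by (unfold dot in Hw; simpl in Hw; case_min_max; lra).
    apply beyond_side; unfold in_rect, dot; simpl; case_min_max; lra.
  - exists East. simpl. destruct (Rle_lt_dec (rx2 B) (rx1 A)); [lra | exfalso].
    enough (Hw : level East B <= dot (normal East) (Rmax (rx1 A) (rx1 B), ry1 B))
      by (unfold dot in Hw; simpl in Hw; case_min_max; lra).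
    apply beyond_side; unfold in_rect, dot; simpl; case_min_max; lra.
  - exists North. simpl. destruct (Rle_lt_dec (ry2 B) (ry1 A)); [lra | exfalso].
    enough (Hw : level North B <= dot (normal North) (rx1 B, Rmax (ry1 A) (ry1 B)))
      by (unfold dot in Hw; simpl in Hw; case_min_max; lra).
    apply beyond_side; unfold in_rect, dot; simpl; case_min_max; lra.
  - exists West. simpl. destruct (Rle_lt_dec (rx2 A) (rx1 B)); [lra | exfalso].
    enough (Hw : level West B <= dot (normal West) (Rmin (rx2 A) (rx2 B), ry1 B))
      by (unfold dot in Hw; simpl in Hw; case_min_max; lra).
    apply beyond_side; unfold in_rect, dot; simpl; case_min_max; lra.
Qed.

Theorem lemma3 (A B C : rect) (SA SB SC : list point) (xA xC : point)
    (P : list point) (a c : point) :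
  wf_rect A -> wf_rect B -> wf_rect C ->
  A <> B -> B <> C -> A <> C ->
  shares_edge B A -> shares_edge B C ->
  meet_in_at_most_a_point A C ->
  (forall p, In p SA -> in_rect A p) ->
  (forall p, In p SB -> in_rect B p) ->
  (forall p, In p SC -> in_rect C p) ->
  closest_point SB (in_rect A) xA ->
  closest_point SB (in_rect C) xC ->
  xA <> xC ->
  hamiltonian_path SB P xA xC ->
  noncrossing (path_edges P) ->
  In a SA -> In c SC ->
  noncrossing (path_edges P ++ (xA, a) :: (xC, c) :: nil).
Proof.
  intros wA wB wC _ _ _ shA shC meetAC SA_A SB_B SC_C clA clC neAC [_ [P_SB _]] ncP Ha Hc.
  destruct (abuts_of_shares_edge A B wA wB shA) as [sA abA].
  destruct (abuts_of_shares_edge C B wC wB shC) as [sC abC].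
  pose proof (closest_point_highest sA B A SB xA wA abA SB_B clA) as highA.
  pose proof (closest_point_highest sC B C SB xC wC abC SB_B clC) as highC.
  destruct clA as [xA_SB _], clC as [xC_SB _].
  pose proof (in_rect_below_level sA B xA (SB_B xA xA_SB)) as xA_below.
  pose proof (in_rect_below_level sC B xC (SB_B xC xC_SB)) as xC_below.
  pose proof (abuts_above_level sA B A a abA (SA_A a Ha)) as a_above.
  pose proof (abuts_above_level sC B C c abC (SC_C c Hc)) as c_above.
  apply noncrossing_app; [exact ncP | apply noncrossing_pair | ].
  - intros z Za Zc; simpl in *.
    destruct (seg_meet_far_ends (normal sA) (normal sC) (level sA B) (level sC B)
                xA a xC c z) as [-> ->]; auto.
    + destruct (highA xC xC_SB); [congruence | assumption].
    + destruct (highC xA xA_SB); [congruence | assumption].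
    + apply (abuts_disjoint_below_level sC sA B C A);
        auto using meet_in_at_most_a_point_sym.
    + apply (abuts_disjoint_below_level sA sC B A C); auto.
  - intros [p q] f Hpq [<- | [<- | []]];
      destruct (path_edges_in P (p, q) Hpq) as [Hp Hq]; simpl in Hp, Hq;
      apply P_SB in Hp, Hq.
    + apply meet_at_endpoints_apex with (u := normal sA); auto; lra.
    + apply meet_at_endpoints_apex with (u := normal sC); auto; lra.
Qed.
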